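(* Let $\alpha\in(0,1)$. Assume the setting described in the context, and assume: (i) (concentration over calibration data) there exist $\varepsilon_{\mathrm{cal}}\in(0,1)$ and $\delta_{\mathrm{cal}}\in(0,1)$ such that for every measurable $q:(\mathcal{X}\times\mathcal{Y})^{n_{\mathrm{train}}}\to\mathbb{R}$, \[\mathbb{P}\left[\left|\frac{1}{n_{\mathrm{cal}}}\sum_{i\in I_{\mathrm{cal}}}\mathbf{1}\{\widehat{s}_{\mathrm{train}}(X_i,Y_i)\le q_{\mathrm{train}}\}-P_{q,\mathrm{train}}\right|\le\varepsilon_{\mathrm{cal}}\right]\ge 1-\delta_{\mathrm{cal}};\] (ii) (marginal decoupling of test data) there exists $\varepsilon_{\mathrm{test}}$ such that for every measurable $q:(\mathcal{X}\times\mathcal{Y})^{n_{\mathrm{train}}}\to\mathbb{R}$ and every $i\in I_{\mathrm{test}}$, \[\left|\mathbb{P}[\widehat{s}_{\mathrm{train}}(X_i,Y_i)\le q_{\mathrm{train}}]-\mathbb{E}[P_{q,\mathrm{train}}]\right|\le\varepsilon_{\mathrm{test}}.\] Then for all $i\in I_{\mathrm{test}}$, \[\mathbb{P}[Y_i\in C_{1-\alpha}(X_i)]\ge 1-\alpha-\varepsilon_{\mathrm{cal}}-\delta_{\mathrm{cal}}-\varepsilon_{\mathrm{test}}.\] Additionally, if $\widehat{s}_{\mathrm{train}}(X_*,Y_* )$ almost surely has a continuous distribution conditionally on the training data $(X_i,Y_i)_{i\in I_{\mathrm{train}}}$, then for all $i\in I_{\mathrm{test}}$, \[\left|\mathbb{P}[Y_i\in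 C_{1-\alpha}(X_i)]-(1-\alpha)\right|\le\varepsilon_{\mathrm{cal}}+\delta_{\mathrm{cal}}+\varepsilon_{\mathrm{test}}.\]
   Context: Let $\mathcal{X},\mathcal{Y}$ be measurable spaces. The sample $(X_i,Y_i)_{i=1}^n$ consists of random pairs in $\mathcal{X}\times\mathcal{Y}$, and $(X_*,Y_* )$ is an additional random pair in $\mathcal{X}\times\mathcal{Y}$, independent of the sample, with $(X_i,Y_i)\sim(X_*,Y_* )$ for all $i\in\{1,\dots,n\}$. Write $n=n_{\mathrm{train}}+n_{\mathrm{cal}}+n_{\mathrm{test}}$ with positive integers, and set $I_{\mathrm{train}}=\{1,\dots,n_{\mathrm{train}}\}$, $I_{\mathrm{cal}}=\{n_{\mathrm{train}}+1,\dots,n_{\mathrm{train}}+n_{\mathrm{cal}}\}$, $I_{\mathrm{test}}=\{n_{\mathrm{train}}+n_{\mathrm{cal}}+1,\dots,n\}$. Let $s:(\mathcal{X}\times\mathcal{Y})^{n_{\mathrm{train}}+1}\to\mathbb{R}$ be any (measurable) function and define the trained conformity score $\widehat{s}_{\mathrm{train}}(x,y)=s((X_i,Y_i)_{i\in I_{\mathrm{train}}},(x,y))$. For $\phi\in[0,1)$, the empirical quantile is $\widehat{q}_{\phi,\mathrm{cal}}=\inf\{t\in\mathbb{R}:\frac{1}{n_{\mathrm{cal}}}\sum_{i\in I_{\mathrm{cal}}}\mathbf{1}\{\widehat{s}_{\mathrm{train}}(X_i,Y_i)\le t\}\ge\phi\}$, and the predictive set is $C_\phi(x)=\{y\in\mathcal{Y}:\widehat{s}_{\mathrm{train}}(x,y)\le\widehat{q}_{\phi,\mathrm{cal}}\}$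 for $x\in\mathcal{X}$. For a measurable $q:(\mathcal{X}\times\mathcal{Y})^{n_{\mathrm{train}}}\to\mathbb{R}$, write $q_{\mathrm{train}}=q((X_i,Y_i)_{i\in I_{\mathrm{train}}})$ and $P_{q,\mathrm{train}}=\mathbb{P}[\widehat{s}_{\mathrm{train}}(X_*,Y_* )\le q_{\mathrm{train}}\mid (X_i,Y_i)_{i\in I_{\mathrm{train}}}]$. *)

From HB Require Import structures.
From mathcomp Require Import all_boot all_order all_algebra.
From mathcomp Require Import all_classical all_reals all_analysis.


Unset Strict Implicit.
Unset Printing Implicit Defensive.

Import Order.TTheory GRing.Theory Num.Theory.
Import numFieldNormedType.Exports.
Local Open Scope classical_set_scope.
Local Open Scope ring_scope.

(* Random pairs are indexed 1-based by nat, as in the paper: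
   (Xs i, Ys i), i = 1..n.  Index sets:
   I_train = {1..ntrain}, I_cal = {ntrain+1..ntrain+ncal},
   I_test = {ntrain+ncal+1..n}. *)

Definition in_Itrain (ntrain i : nat) : bool := (1 <= i <= ntrain)%N.
Definition in_Ical (ntrain ncal i : nat) : bool :=
  (ntrain < i <= ntrain + ncal)%N.
Definition in_Itest (ntrain ncal ntest i : nat) : bool :=
  (ntrain + ncal < i <= ntrain + ncal + ntest)%N.

Definition sample {Om X Y : Type} (n : nat) (Xs : nat -> Om -> X)
  (Ys : nat -> Om -> Y) (w : Om) : n.-tuple (X * Y) :=
  [tuple (Xs (val i).+1 w, Ys (val i).+1 w) | i < n].

Definition train_data {Om X Y : Type} (ntrain : nat) (Xs : nat -> Om -> X)
  (Ys : nat -> Om -> Y) (w : Om) : ntrain.-tuple (X * Y) :=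
  sample ntrain Xs Ys w.

Definition strain {X Y : Type} {R : Type} {ntrain : nat}
  (s : ntrain.+1.-tuple (X * Y) -> R) (t : ntrain.-tuple (X * Y))
  (z : X * Y) : R :=
  s [tuple of rcons t z].

Definition same_law {d d' : measure_display} {Om : measurableType d}
  {T : measurableType d'} {R : realType} (P : probability Om R)
  (f g : Om -> T) : Prop :=
  forall A : set T, measurable A -> P (f @^-1` A) = P (g @^-1` A).

Definition indep_rv {d d1 d2 : measure_display} {Om : measurableType d}
  {T1 : measurableType d1} {T2 : measurableType d2} {R : realType}
  (P : probability Om R) (f : Om -> T1) (g : Om -> T2) : Prop :=
  forall (A : set T1) (B : set T2), measurable A -> measurable B ->
    P (f @^-1` A `&` g @^-1` B) = (P (f @^-1` A) * P (g @^-1` B))%E.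

(* P_{q,train}(w) = P[ s_train(X_star,Y_star) <= q_train | train ](w).
   Since (X_star,Y_star) is independent of the sample (hypothesis of the
   theorem), the (regular version of the) conditional probability given the
   training data is obtained by freezing the training data at its value
   train(w) and integrating over (X_star,Y_star). *)
Definition Pq_train {d d1 d2 : measure_display} {Om : measurableType d}
  {X : measurableType d1} {Y : measurableType d2} {R : realType}
  (P : probability Om R) (ntrain : nat) (Xs : nat -> Om -> X)
  (Ys : nat -> Om -> Y) (XS : Om -> X) (YS : Om -> Y)
  (s : ntrain.+1.-tuple (X * Y) -> R) (q : ntrain.-tuple (X * Y) -> R)
  (w : Om) : R :=
  fine (P [set w' | strain s (train_data ntrain Xs Ys w) (XS w', YS w')
                    <= q (train_data ntrain Xs Ys w)]).

Definition cond_cdf {d d1 d2 : measure_display} {Om : measurableType d}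
  {X : measurableType d1} {Y : measurableType d2} {R : realType}
  (P : probability Om R) (ntrain : nat) (Xs : nat -> Om -> X)
  (Ys : nat -> Om -> Y) (XS : Om -> X) (YS : Om -> Y)
  (s : ntrain.+1.-tuple (X * Y) -> R) (w : Om) (t : R) : R :=
  fine (P [set w' | strain s (train_data ntrain Xs Ys w) (XS w', YS w') <= t]).

Definition emp_cdf_cal {Om X Y : Type} {R : realType} (ntrain ncal : nat)
  (Xs : nat -> Om -> X) (Ys : nat -> Om -> Y)
  (s : ntrain.+1.-tuple (X * Y) -> R) (w : Om) (t : R) : R :=
  (ncal%:R)^-1 * \sum_(ntrain.+1 <= i < (ntrain + ncal).+1)
     (nat_of_bool (strain s (train_data ntrain Xs Ys w) (Xs i w, Ys i w) <= t))%:R.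

Definition qhat_cal {Om X Y : Type} {R : realType} (ntrain ncal : nat)
  (Xs : nat -> Om -> X) (Ys : nat -> Om -> Y)
  (s : ntrain.+1.-tuple (X * Y) -> R) (phi : R) (w : Om) : R :=
  inf [set t : R | phi <= emp_cdf_cal ntrain ncal Xs Ys s w t].

Definition conf_set {Om X Y : Type} {R : realType} (ntrain ncal : nat)
  (Xs : nat -> Om -> X) (Ys : nat -> Om -> Y)
  (s : ntrain.+1.-tuple (X * Y) -> R) (phi : R) (w : Om) (x : X) : set Y :=
  [set y | strain s (train_data ntrain Xs Ys w) (x, y)
           <= qhat_cal ntrain ncal Xs Ys s phi w].

From HB Require Import structures.
From mathcomp Require Import all_boot all_order all_algebra.
From mathcomp Require Import all_classical all_reals all_analysis.
From mathcomp Require Import measurable_realfun.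
From mathcomp Require Import zify lra.
Import Order.TTheory GRing.Theory Num.Theory.
Import numFieldNormedType.Exports.
Local Open Scope classical_set_scope.
Local Open Scope ring_scope.

(* Let F_t be the conditional CDF of the score of a fresh pair given training
   data t, and q_c(t) its left c-quantile, a measurable function of t.  By (ii),
   the test score falls below q_c(train) with probability within eps_test of
   E[F(q_c)], which is >= c by right continuity of F, and <= c when F is
   continuous.
   Upper bound, c = 1 - alpha + eps_cal: on the event of (i) for q_c, the
   empirical CDF at q_c is >= 1 - alpha, hence qhat <= q_c.
   Lower bound, c = 1 - alpha - eps_cal: if qhat < q_c, the empirical CDF
   reaches 1 - alpha at some q_c - 1/(k+1), where F < c.  As qhat depends on the
   calibration data, (i) cannot be applied to it; it is applied instead to each
   threshold q_c - 1/(k+1), a function of the training data only, and the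
   corresponding deviation events increase in k, so their union has
   probability <= delta_cal. *)

(* [qhat_cal] is [lquantile] of the empirical CDF.  The [inf] of a set that is
   not bounded below is a junk value, whence the hypothesis [f_lt]. *)
Section left_quantile.
Context {R : realType}.

Definition lquantile (f : R -> R) (c : R) : R := inf [set r | c <= f r].

Context {f : R -> R} {c : R}.
Hypothesis f_nd : {homo f : x y / x <= y}.
Hypothesis f_lt : exists r, f r < c.
Hypothesis f_ge : exists r, c <= f r.

Let lquantile_set_lbound : has_lbound [set r | c <= f r].
Proof.
have [r0 fr0] := f_lt; exists r0 => r /= cr; rewrite leNgt; apply/negP => rr0.
by move: (lt_le_trans fr0 cr); rewrite ltNge f_nd ?ltW.
Qed.

Let lquantile_set_neq0 : [set r | c <= f r] !=set0.
Proof. by have [r1 fr1] := f_ge; exists r1. Qed.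

Lemma lquantile_le x : c <= f x -> lquantile f c <= x.
Proof. exact: ge_inf lquantile_set_lbound _. Qed.

Lemma lt_lquantile x : x < lquantile f c -> f x < c.
Proof. by rewrite ltNge; apply: contraNlt => /lquantile_le. Qed.

Lemma le_lquantile x : (forall y, y < x -> f y < c) -> x <= lquantile f c.
Proof.
move=> flt; apply: lb_le_inf lquantile_set_neq0 _ => y /= cy.
by rewrite leNgt; apply/negP => /flt; rewrite ltNge cy.
Qed.

Lemma lquantile_lt_rat x :
  lquantile f c < x -> exists q : rat, ratr q < x /\ c <= f (ratr q).
Proof.
move=> /(inf_lt lquantile_set_neq0) [y /= cy yx].
have [q /andP[]] := rat_in_itvoo yx; rewrite !bnd_simp => yq qx.
by exists q; split => //; apply: le_trans cy (f_nd _ _ (ltW yq)).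
Qed.

Lemma lquantile_lt x : lquantile f c < x -> c <= f x.
Proof.
by move=> /lquantile_lt_rat [q [qx cq]]; exact: le_trans cq (f_nd _ _ (ltW qx)).
Qed.

Lemma right_continuous_le_lquantile :
  f x @[x --> (lquantile f c)^'+] --> f (lquantile f c) ->
  c <= f (lquantile f c).
Proof.
move=> fr; rewrite -(cvg_lim _ fr)//.
apply: limr_ge; first by apply/cvg_ex; exists (f (lquantile f c)).
by near=> x; apply: lquantile_lt; near: x; exact: nbhs_right_gt.
Unshelve. all: by end_near. Qed.

Lemma continuous_lquantile_le :
  {for lquantile f c, continuous f} -> f (lquantile f c) <= c.
Proof.
move=> /cvg_at_left_filter fl; rewrite -(cvg_lim _ fl)//.
apply: limr_le; first by apply/cvg_ex; exists (f (lquantile f c)).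
by near=> x; apply/ltW/lt_lquantile; near: x; exact: nbhs_left_lt.
Unshelve. all: by end_near. Qed.

End left_quantile.

Lemma measurable_lquantile {R : realType} {d} {T : measurableType d}
    (F : T -> R -> R) (c : R) :
  (forall t, {homo F t : x y / x <= y}) ->
  (forall t, exists r, F t r < c) -> (forall t, exists r, c <= F t r) ->
  (forall r, measurable_fun setT (F ^~ r)) ->
  measurable_fun setT (fun t => lquantile (F t) c).
Proof.
move=> F_nd F_lt F_ge mF.
apply: (measurability _ (RGenInftyO.measurableE R)) => //.
move=> _ [_ [r ->] <-]; rewrite setTI.
have -> : (fun t => lquantile (F t) c) @^-1` `]-oo, r[ =
    \bigcup_(q : rat) [set t | ratr q < r /\ c <= F t (ratr q)].
  apply/seteqP; split => t /=; rewrite in_itv /=.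
  - by move=> /(lquantile_lt_rat (F_nd t) (F_ge t)) [q qr]; exists q.
  - move=> [q _ [qr cq]].
    exact: le_lt_trans (lquantile_le (F_nd t) (F_lt t) _ cq) qr.
apply: bigcupT_measurable_rat => q.
have [qr|qr] := ltP (ratr q) r; last first.
  by rewrite (_ : [set t | _ /\ _] = set0) //; apply/seteqP; split => t // -[].
rewrite (_ : [set t | _ /\ _] = F ^~ (ratr q) @^-1` `[c, +oo[).
  by rewrite -[X in measurable X]setTI; apply: mF => //; exact: measurable_itv.
by apply/seteqP; split => t /=; rewrite in_itv /= andbT; [case|].
Qed.

Section real_cdf.
Context {d} {T : measurableType d} {R : realType} {P : probability T R}.
Variable V : {RV P >-> R}.

Definition rcdf (r : R) : R := fine (cdf V r).

Lemma rcdfE r : (rcdf r)%:E = cdf V r.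
Proof. by rewrite fineK// fin_num_measure. Qed.

Lemma rcdf_nondecreasing : {homo rcdf : x y / x <= y}.
Proof. by move=> x y xy; rewrite -lee_fin !rcdfE cdf_nondecreasing. Qed.

Lemma rcdf_right_continuous : right_continuous rcdf.
Proof.
by move=> x; apply: fine_cvg; rewrite rcdfE; exact: cdf_right_continuous.
Qed.

Lemma rcdf_lt c : 0 < c -> exists r, rcdf r < c.
Proof.
move=> c0; have /fine_cvg/cvgr_lt/(_ c c0) [M [_ HM]] := cvg_cdfNy0 V.
by exists (M - 1); apply: HM; rewrite ltrBlDr ltrDl.
Qed.

Lemma rcdf_ge c : c < 1 -> exists r, c <= rcdf r.
Proof.
move=> c1; have /fine_cvg/cvgr_gt/(_ c c1) [M [_ HM]] := cvg_cdfy1 V.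
by exists (M + 1); apply/ltW/HM; rewrite ltrDl.
Qed.

End real_cdf.

Lemma measurable_set_le {d} {T : measurableType d} {R : realType} (f g : T -> R) :
  measurable_fun setT f -> measurable_fun setT g ->
  measurable [set x | f x <= g x].
Proof.
by move=> mf mg; rewrite -[X in measurable X]setTI; exact: measurable_fun_le.
Qed.

Lemma lee_dist_EFin {R : realType} {a e : R} {x : \bar R} :
  (`|a%:E - x| <= e%:E)%E -> exists2 y : R, x = y%:E & `|a - y| <= e.
Proof. by case: x => [y| |] //= h; exists y. Qed.

Lemma nondecreasing_bigcup_measure_le {d} {T : measurableType d} {R : realType}
    (mu : {measure set T -> \bar R}) {F : (set T)^nat} {x : \bar R} :
  (forall n, measurable (F n)) -> nondecreasing_seq F ->
  (forall n, (mu (F n) <= x)%E) -> (mu (\bigcup_n F n) <= x)%E.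
Proof.
move=> mF F_nd Fx.
have mUF : measurable (\bigcup_n F n) by exact: bigcupT_measurable.
have muF := nondecreasing_cvg_mu (mu := mu) mF mUF F_nd.
rewrite -(cvg_lim _ muF)//.
by apply: lime_le; [apply/cvg_ex; eexists; exact: muF | exact: nearW].
Qed.

Section split_conformal.
Context {R : realType} {d : measure_display} {Om : measurableType d}.
Variable P : probability Om R.
Context {dX dY : measure_display} {X : measurableType dX} {Y : measurableType dY}.
Context {ntrain ncal ntest : nat}.
Context {Xs : nat -> Om -> X} {Ys : nat -> Om -> Y} {XS : Om -> X} {YS : Om -> Y}.
Hypothesis mXs : forall i, (1 <= i <= ntrain + ncal + ntest)%N ->
  measurable_fun setT (Xs i).
Hypothesis mYs : forall i, (1 <= i <= ntrain + ncal + ntest)%N ->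
  measurable_fun setT (Ys i).
Hypothesis mXS : measurable_fun setT XS.
Hypothesis mYS : measurable_fun setT YS.
Context {s : ntrain.+1.-tuple (X * Y) -> R}.
Hypothesis ms : measurable_fun setT s.

Local Notation T := (ntrain.-tuple (X * Y)).
Local Notation tr := (train_data ntrain Xs Ys).

Lemma measurable_train_data : measurable_fun setT tr.
Proof.
apply/measurable_fun_tnthP => j /=.
rewrite (_ : _ \o _ = fun w => (Xs j.+1 w, Ys j.+1 w)); last first.
  by apply/funext => w /=; rewrite /train_data /sample tnth_mktuple.
have hj : (1 <= j.+1 <= ntrain + ncal + ntest)%N.
  by have := ltn_ord j; lia.
exact: measurable_fun_pair (mXs _ hj) (mYs _ hj).
Qed.

Lemma measurable_strain :
  measurable_fun setT (fun p : T * (X * Y) => strain s p.1 p.2).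
Proof.
apply: measurableT_comp ms _; apply/measurable_fun_tnthP => j /=.
have [jn|jn] := ltnP j ntrain.
  rewrite (_ : _ \o _ = (fun t : T => tnth t (Ordinal jn)) \o fst).
    by apply: measurableT_comp => //; exact: measurable_tnth.
  apply/funext => p /=; rewrite /tnth /= nth_rcons size_tuple jn.
  by apply: set_nth_default; rewrite size_tuple.
rewrite (_ : _ \o _ = snd) //; apply/funext => p /=.
have jE : j = ntrain :> nat by have := ltn_ord j; lia.
by rewrite /tnth /= nth_rcons size_tuple jE ltnn eqxx.
Qed.

Lemma measurable_sample_score {i} : (1 <= i <= ntrain + ncal + ntest)%N ->
  measurable_fun setT (fun w => strain s (tr w) (Xs i w, Ys i w)).
Proof.
move=> hi; have mZi := measurable_fun_pair (mXs _ hi) (mYs _ hi).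
exact: measurableT_comp measurable_strain
  (measurable_fun_pair measurable_train_data mZi).
Qed.

Lemma measurable_new_score (t : T) :
  measurable_fun setT (fun w => strain s t (XS w, YS w)).
Proof.
have mZ := measurable_fun_pair mXS mYS.
exact: measurableT_comp measurable_strain
  (measurable_fun_pair (measurable_cst t) mZ).
Qed.

Definition new_score (t : T) : {RV P >-> R} :=
  mfun_Sub (mem_set (measurable_new_score t)).

(* [cond_cdf P .. w] is [score_cdf (train_data .. w)], and [Pq_train P .. q w] is
   [score_cdf (train_data .. w) (q (train_data .. w))]. *)
Definition score_cdf (t : T) (r : R) : R :=
  fine (P [set w | strain s t (XS w, YS w) <= r]).

Lemma score_cdfE t : score_cdf t = rcdf (new_score t).
Proof. by []. Qed.

Lemma measurable_score_cdf {g : T -> R} : measurable_fun setT g ->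
  measurable_fun setT (fun t => score_cdf t (g t)).
Proof.
move=> mg; apply: measurableT_comp (fine_measurable measurableT) _ => /=.
pose Z w := (XS w, YS w).
have mZ : measurable_fun setT Z by exact: measurable_fun_pair.
pose A := [set p : T * (X * Y) | strain s p.1 p.2 <= g p.1].
have mA : measurable A.
  exact: measurable_set_le measurable_strain (measurableT_comp mg measurable_fst).
pose Z_rv := mfun_Sub (mem_set mZ).
apply: eq_measurable_fun (measurable_fun_xsection (distribution P Z_rv) mA) => t _.
by rewrite /= /distribution /pushforward xsectionE.
Qed.

Lemma score_cdf_nondecreasing t : {homo score_cdf t : x y / x <= y}.
Proof. by rewrite score_cdfE; exact: rcdf_nondecreasing. Qed.

Definition score_quantile (c : R) (t : T) : R := lquantile (score_cdf t) c.

Section score_quantile.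
Context {c : R}.
Hypothesis c_gt0 : 0 < c.
Hypothesis c_lt1 : c < 1.

Let score_cdf_lt t : exists r, score_cdf t r < c.
Proof. by rewrite score_cdfE; exact: rcdf_lt. Qed.

Let score_cdf_ge t : exists r, c <= score_cdf t r.
Proof. by rewrite score_cdfE; exact: rcdf_ge. Qed.

Lemma measurable_score_quantile : measurable_fun setT (score_quantile c).
Proof.
apply: measurable_lquantile => // [|r]; first exact: score_cdf_nondecreasing.
exact: measurable_score_cdf (measurable_cst r).
Qed.

Lemma score_cdf_quantile_ge t : c <= score_cdf t (score_quantile c t).
Proof.
apply: right_continuous_le_lquantile => //; first exact: score_cdf_nondecreasing.
by rewrite score_cdfE; exact: rcdf_right_continuous.
Qed.

Lemma score_cdf_lt_quantile t r : r < score_quantile c t -> score_cdf t r < c.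
Proof. by apply: lt_lquantile => //; exact: score_cdf_nondecreasing. Qed.

Lemma score_cdf_quantile_le t :
  {for score_quantile c t, continuous (score_cdf t)} ->
  score_cdf t (score_quantile c t) <= c.
Proof. by apply: continuous_lquantile_le => //; exact: score_cdf_nondecreasing. Qed.

End score_quantile.

Local Notation emp := (emp_cdf_cal ntrain ncal Xs Ys s).
Local Notation cal_score w i :=
  (strain s (tr w) (Xs (i + ntrain.+1)%N w, Ys (i + ntrain.+1)%N w)).

Lemma emp_cdf_calE w r : emp w r = ncal%:R^-1 * \sum_(i < ncal)
  (nat_of_bool (cal_score w i <= r))%:R.
Proof.
rewrite /emp_cdf_cal; congr (_ * _).
rewrite (_ : (ntrain + ncal).+1 = ncal + ntrain.+1)%N; last by rewrite addnS addnC.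
by rewrite -{1}(add0n ntrain.+1) big_addn addnK big_mkord.
Qed.

Lemma emp_cdf_cal_nondecreasing w : {homo emp w : x y / x <= y}.
Proof.
move=> x y xy; rewrite /emp_cdf_cal ler_wpM2l ?invr_ge0// ler_sum// => i _.
by rewrite ler_nat; case: (boolP (_ <= x)) => // /le_trans/(_ xy) ->.
Qed.

Lemma emp_cdf_cal_lt w c : 0 < c -> exists r, emp w r < c.
Proof.
pose m := \big[Order.min/0]_(i < ncal) cal_score w i.
move=> c0; exists (m - 1); rewrite emp_cdf_calE big1 ?mulr0// => i _.
suff /lt_geF-> : m - 1 < cal_score w i by [].
by rewrite ltrBlDr (le_lt_trans (bigmin_le _ i _)) ?ltrDl.
Qed.

Lemma emp_cdf_cal_ge w c : (0 < ncal)%N -> c <= 1 -> exists r, c <= emp w r.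
Proof.
pose M := \big[Order.max/0]_(i < ncal) cal_score w i.
move=> ncal0 c1; exists M; rewrite emp_cdf_calE (eq_bigr (fun=> 1)).
  by rewrite sumr_const card_ord mulVf ?pnatr_eq0 -?lt0n.
by move=> i _; rewrite le_bigmax.
Qed.

Lemma measurable_emp_cdf_cal {g : Om -> R} : measurable_fun setT g ->
  measurable_fun setT (fun w => emp w (g w)).
Proof.
move=> mg; under eq_fun do rewrite emp_cdf_calE.
apply: measurable_funM => //; apply: measurable_sum => i /=.
have hi : (1 <= i + ntrain.+1 <= ntrain + ncal + ntest)%N.
  by have := ltn_ord i; lia.
rewrite (_ : (fun w => _) = fun w => if cal_score w i <= g w then 1 else 0).
  apply: measurable_fun_ifT => //.
  exact: measurable_fun_ler (measurable_sample_score hi) mg.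
by apply/funext => w; case: ifP.
Qed.

Local Notation qhat := (qhat_cal ntrain ncal Xs Ys s).

Lemma measurable_qhat_cal {phi} : (0 < ncal)%N -> 0 < phi <= 1 ->
  measurable_fun setT (qhat phi).
Proof.
move=> ncal0 /andP[phi0 phi1]; apply: measurable_lquantile.
- exact: emp_cdf_cal_nondecreasing.
- by move=> w; exact: emp_cdf_cal_lt.
- by move=> w; exact: emp_cdf_cal_ge.
- by move=> r; exact: measurable_emp_cdf_cal.
Qed.

Local Notation Pq := (Pq_train P ntrain Xs Ys XS YS s).

Lemma measurable_Pq_train {q} :
  measurable_fun setT q -> measurable_fun setT (Pq q).
Proof.
move=> mq; rewrite (_ : Pq q = (fun t => score_cdf t (q t)) \o tr) //.
exact: measurableT_comp (measurable_score_cdf mq) measurable_train_data.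
Qed.

Lemma Pq_train_ge0 q w : 0 <= Pq q w.
Proof. exact/fine_ge0/measure_ge0. Qed.

Section coverage.
Context {alpha eps_cal delta_cal eps_test : R} {i : nat}.
Hypothesis ncal_gt0 : (0 < ncal)%N.
Hypothesis alpha01 : 0 < alpha < 1.
Hypothesis eps_cal_gt0 : 0 < eps_cal.
Hypothesis hi : in_Itest ntrain ncal ntest i.

Local Notation cal_good q := [set w | `|emp w (q (tr w)) - Pq q w| <= eps_cal].
Local Notation score_i w := (strain s (tr w) (Xs i w, Ys i w)).
Local Notation Cov := [set w | score_i w <= qhat (1 - alpha) w].

Hypothesis hcal : forall q : T -> R, measurable_fun setT q ->
  ((1 - delta_cal)%:E <= P (cal_good q))%E.
Hypothesis htest : forall q : T -> R, measurable_fun setT q ->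
  (`| P [set w | (score_i w <= q (tr w))%R] - 'E_P[Pq q] | <= eps_test%:E)%E.

Let i_range : (1 <= i <= ntrain + ncal + ntest)%N.
Proof. by move: hi; rewrite /in_Itest; lia. Qed.

Let probabilityE {A : set Om} : measurable A -> P A = (fine (P A))%:E.
Proof. by move=> mA; rewrite fineK// fin_num_measure. Qed.

Let measurable_Cov : measurable Cov.
Proof.
have phi01 : 0 < 1 - alpha <= 1.
  by case/andP: alpha01 => a0 a1; rewrite subr_gt0 a1 gerBl ltW.
exact: measurable_set_le (measurable_sample_score i_range)
  (measurable_qhat_cal ncal_gt0 phi01).
Qed.

Lemma measurable_cal_good {q} : measurable_fun setT q -> measurable (cal_good q).
Proof.
move=> mq; apply: measurable_set_le => //; apply: measurableT_comp => //.
apply: measurable_funB (measurable_Pq_train mq).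
exact: measurable_emp_cdf_cal (measurableT_comp mq measurable_train_data).
Qed.

Lemma cal_deviation_le {q} : measurable_fun setT q ->
  (P (~` cal_good q) <= delta_cal%:E)%E.
Proof.
move=> mq; have mG := measurable_cal_good mq.
rewrite probability_setC// probabilityE// -EFinB lee_fin.
by have := hcal _ mq; rewrite probabilityE// lee_fin; lra.
Qed.

Lemma delta_cal_ge0 : 0 <= delta_cal.
Proof.
have mG := measurable_cal_good (measurable_cst (0 : R)).
have := le_trans (hcal _ (measurable_cst _)) (probability_le1 P mG).
by rewrite lee_fin gerBl.
Qed.

Lemma eps_test_ge0 : 0 <= eps_test.
Proof.
rewrite -lee_fin.
exact: le_trans (abse_ge0 _) (htest _ (measurable_cst (0 : R))).
Qed.

Lemma measurable_test_score_le {q} : measurable_fun setT q ->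
  measurable [set w | score_i w <= q (tr w)].
Proof.
move=> mq; apply: measurable_set_le (measurable_sample_score i_range) _.
exact: measurableT_comp mq measurable_train_data.
Qed.

Lemma test_score_prob_ge {q c} : measurable_fun setT q -> 0 <= c ->
  (forall w, c <= Pq q w) ->
  ((c - eps_test)%:E <= P [set w | (score_i w <= q (tr w))%R])%E.
Proof.
move=> mq c0 cPq; have mA := measurable_test_score_le mq.
have cE : (c%:E <= 'E_P[Pq q])%E.
  rewrite -(expectation_cst P c); apply: expectation_le => //.
  - exact: measurable_Pq_train.
  - exact: Pq_train_ge0.
  - exact: aeW.
have := htest _ mq; rewrite probabilityE// => /lee_dist_EFin[y Ey].
rewrite Ey lee_fin in cE; rewrite probabilityE// lee_fin ler_norml => /andP[].
lra.
Qed.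

Lemma test_score_prob_le {q c} : measurable_fun setT q -> 0 <= c ->
  {ae P, forall w, Pq q w <= c} ->
  (P [set w | (score_i w <= q (tr w))%R] <= (c + eps_test)%:E)%E.
Proof.
move=> mq c0 Pqc; have mA := measurable_test_score_le mq.
have Ec : ('E_P[Pq q] <= c%:E)%E.
  rewrite -(expectation_cst P c); apply: expectation_le => //.
  - exact: measurable_Pq_train.
  - exact: Pq_train_ge0.
have := htest _ mq; rewrite probabilityE// => /lee_dist_EFin[y Ey].
rewrite Ey lee_fin in Ec; rewrite probabilityE// lee_fin ler_norml => /andP[].
lra.
Qed.

Lemma coverage_ge :
  ((1 - alpha - eps_cal - delta_cal - eps_test)%:E <= P Cov)%E.
Proof.
have [a0 a1] := andP alpha01; have e0 := eps_cal_gt0.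
have d0 := delta_cal_ge0; have t0 := eps_test_ge0.
pose c := 1 - alpha - eps_cal.
have [c_le0|c_gt0] := leP c 0.
  by apply: le_trans (measure_ge0 _ _); rewrite lee_fin; rewrite /c in c_le0; lra.
have c_lt1 : c < 1 by rewrite /c; lra.
pose q := score_quantile c.
have mq : measurable_fun setT q := measurable_score_quantile c_gt0 c_lt1.
pose qk k t := q t - k.+1%:R^-1.
have mqk k : measurable_fun setT (qk k) by exact: measurable_funB.
pose B k := [set w | 1 - alpha <= emp w (qk k (tr w))].
have mB k : measurable (B k).
  apply: measurable_set_le => //.
  exact: measurable_emp_cdf_cal (measurableT_comp (mqk k) measurable_train_data).
have B_bad k : B k `<=` ~` cal_good (qk k).
  move=> w; rewrite /B /= => Bw; apply/negP.
  rewrite -ltNge ltr_normr; apply/orP; left.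
  have : Pq (qk k) w < c by apply: score_cdf_lt_quantile; rewrite // /qk gtrBl.
  by rewrite /c; lra.
have PB k : (P (B k) <= delta_cal%:E)%E.
  apply: le_trans (cal_deviation_le (mqk k)).
  apply: le_measure (B_bad k); rewrite inE //.
  exact/measurableC/measurable_cal_good.
have B_nd : nondecreasing_seq B.
  move=> m n mn; apply/subsetPset => w; rewrite /B /= => /le_trans; apply.
  apply: emp_cdf_cal_nondecreasing.
  by rewrite /qk lerD2l lerN2 lef_pV2 ?posrE// ler_nat.
have PUB : (P (\bigcup_k B k) <= delta_cal%:E)%E.
  exact: nondecreasing_bigcup_measure_le.
have mUB : measurable (\bigcup_k B k) by exact: bigcupT_measurable.
have A_sub : [set w | score_i w <= q (tr w)] `<=` Cov `|` \bigcup_k B k.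
  move=> w /= Aw; case: (pselect ((\bigcup_k B k) w)) => [|notB]; [by right|left].
  apply: le_trans Aw _; apply: le_lquantile => [|y /ltr_add_invr[k yk]].
    by apply: emp_cdf_cal_ge => //; lra.
  have yqk : y <= qk k (tr w) by rewrite /qk lerBrDr ltW.
  rewrite ltNge; apply/negP => ley; apply: notB; exists k => //.
  exact: le_trans ley (emp_cdf_cal_nondecreasing w _ _ yqk).
have PA := test_score_prob_ge mq (ltW c_gt0)
  (fun w => score_cdf_quantile_ge c_lt1 (tr w)).
have PA_le :
    (P [set w | (score_i w <= q (tr w))%R] <= P Cov + P (\bigcup_k B k))%E.
  apply: le_trans (measureU2 _ measurable_Cov mUB).
  apply: le_measure A_sub; rewrite inE; first exact: measurable_test_score_le.
  exact: measurableU.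
move: (le_trans PA PA_le) PUB.
rewrite (probabilityE measurable_Cov) (probabilityE mUB) -EFinD !lee_fin.
by rewrite /c; lra.
Qed.

Lemma coverage_le :
  {ae P, forall w, continuous (cond_cdf P ntrain Xs Ys XS YS s w)} ->
  (P Cov <= (1 - alpha + eps_cal + delta_cal + eps_test)%:E)%E.
Proof.
move=> hcont; have [a0 a1] := andP alpha01; have e0 := eps_cal_gt0.
have d0 := delta_cal_ge0; have t0 := eps_test_ge0.
pose c := 1 - alpha + eps_cal.
have [c_ge1|c_lt1] := leP 1 c.
  apply: le_trans (probability_le1 _ measurable_Cov) _.
  by rewrite lee_fin; rewrite /c in c_ge1; lra.
have c_gt0 : 0 < c by rewrite /c; lra.
pose q := score_quantile c.
have mq : measurable_fun setT q := measurable_score_quantile c_gt0 c_lt1.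
have mA := measurable_test_score_le mq.
have Cov_sub : Cov `<=` [set w | score_i w <= q (tr w)] `|` ~` cal_good q.
  move=> w /= Covw; case: (pselect (cal_good q w)) => [good|]; [left|by right].
  apply: le_trans Covw _; apply: lquantile_le.
  - exact: emp_cdf_cal_nondecreasing.
  - by apply: emp_cdf_cal_lt; lra.
  have Pq_ge : c <= Pq q w := score_cdf_quantile_ge c_lt1 (tr w).
  by move: good; rewrite /= ler_norml => /andP[good _]; rewrite /c in Pq_ge; lra.
have PA : (P [set w | (score_i w <= q (tr w))%R] <= (c + eps_test)%:E)%E.
  apply: test_score_prob_le mq (ltW c_gt0) _.
  apply: filterS hcont => w cont_w.
  exact: score_cdf_quantile_le c_gt0 (tr w) (cont_w _).
have PG := cal_deviation_le mq.
have mG : measurable (~` cal_good q) by exact/measurableC/measurable_cal_good.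
have PCov_le :
    (P Cov <= P [set w | (score_i w <= q (tr w))%R] + P (~` cal_good q))%E.
  apply: le_trans (measureU2 _ mA mG).
  apply: le_measure Cov_sub; rewrite inE; first exact: measurable_Cov.
  exact: measurableU mA mG.
move: PCov_le PA PG.
rewrite (probabilityE measurable_Cov) (probabilityE mG) (probabilityE mA).
by rewrite -EFinD !lee_fin /c; lra.
Qed.

End coverage.
End split_conformal.

Theorem theorem2p1 (R : realType) (d : measure_display) (Om : measurableType d)
  (P : probability Om R) (dX dY : measure_display)
  (X : measurableType dX) (Y : measurableType dY)
  (ntrain ncal ntest : nat)
  (hntrain : (0 < ntrain)%N) (hncal : (0 < ncal)%N) (hntest : (0 < ntest)%N)
  (Xs : nat -> Om -> X) (Ys : nat -> Om -> Y) (XS : Om -> X) (YS : Om -> Y)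
  (mXs : forall i, (1 <= i <= ntrain + ncal + ntest)%N ->
           measurable_fun setT (Xs i))
  (mYs : forall i, (1 <= i <= ntrain + ncal + ntest)%N ->
           measurable_fun setT (Ys i))
  (mXS : measurable_fun setT XS) (mYS : measurable_fun setT YS)
  (hlaw : forall i, (1 <= i <= ntrain + ncal + ntest)%N ->
     same_law P (fun w => (Xs i w, Ys i w)) (fun w => (XS w, YS w)))
  (hindep : indep_rv P (sample (ntrain + ncal + ntest) Xs Ys)
                       (fun w => (XS w, YS w)))
  (s : ntrain.+1.-tuple (X * Y) -> R) (ms : measurable_fun setT s)
  (alpha : R) (halpha : 0 < alpha < 1)
  (eps_cal delta_cal eps_test : R)
  (heps_cal : 0 < eps_cal < 1) (hdelta_cal : 0 < delta_cal < 1)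
  (hcal : forall q : ntrain.-tuple (X * Y) -> R, measurable_fun setT q ->
     ((1 - delta_cal)%:E <=
      P [set w | (`| emp_cdf_cal ntrain ncal Xs Ys s w
                      (q (train_data ntrain Xs Ys w))
                    - Pq_train P ntrain Xs Ys XS YS s q w | <= eps_cal)%R])%E)
  (htest : forall q : ntrain.-tuple (X * Y) -> R, measurable_fun setT q ->
     forall i, in_Itest ntrain ncal ntest i ->
     (`| P [set w | (strain s (train_data ntrain Xs Ys w) (Xs i w, Ys i w)
                      <= q (train_data ntrain Xs Ys w))%R]
         - 'E_P[Pq_train P ntrain Xs Ys XS YS s q] | <= eps_test%:E)%E) :
  (forall i, in_Itest ntrain ncal ntest i ->
     ((1 - alpha - eps_cal - delta_cal - eps_test)%:E <=
      P [set w | conf_set ntrain ncal Xs Ys s (1 - alpha) w (Xs i w) (Ys i w)])%E)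
  /\
  ({ae P, forall w, continuous (cond_cdf P ntrain Xs Ys XS YS s w)} ->
   forall i, in_Itest ntrain ncal ntest i ->
     (`| P [set w | conf_set ntrain ncal Xs Ys s (1 - alpha) w (Xs i w) (Ys i w)]
         - (1 - alpha)%:E | <= (eps_cal + delta_cal + eps_test)%:E)%E).
Proof.
have eps_cal_gt0 : 0 < eps_cal by case/andP: heps_cal.
have cov_ge i hi := coverage_ge P mXs mYs mXS mYS ms hncal halpha eps_cal_gt0 hi
  hcal (fun q mq => htest q mq i hi).
have cov_le i hi := coverage_le P mXs mYs mXS mYS ms hncal halpha eps_cal_gt0 hi
  hcal (fun q mq => htest q mq i hi).
split => [|hcont] i hi; first exact: cov_ge.
move: (cov_ge i hi) (cov_le i hi hcont); case: (P _) => [p| |] //=.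
by rewrite !lee_fin ler_norml => lo up; apply/andP; split; lra.
Qed.
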